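(* Let $m=1$, let $\boldsymbol{S}\in\mathrm{Mat}(M,M,\mathbb{C})$ be invertible, $\boldsymbol{U}\in\mathrm{Mat}(1,M,\mathbb{C})$, $\boldsymbol{V}\in\mathrm{Mat}(M,1,\mathbb{C})$, $\boldsymbol{K}$ a solution of $\boldsymbol{S}\boldsymbol{K}+\boldsymbol{K}\boldsymbol{S}=\boldsymbol{V}\boldsymbol{U}$, $\boldsymbol{\Xi}=e^{-\boldsymbol{S}x-\boldsymbol{S}^{-1}y}$, $p_0\in\mathbb{C}$, and let $q,p$ be the scalar functions $$q=\boldsymbol{U}\boldsymbol{\Xi}\,(\boldsymbol{I}_M+(\boldsymbol{K}\boldsymbol{\Xi})^2)^{-1}\boldsymbol{V},\qquad p=p_0-\boldsymbol{U}\boldsymbol{\Xi}\boldsymbol{K}\boldsymbol{\Xi}\,(\boldsymbol{I}_M+(\boldsymbol{K}\boldsymbol{\Xi})^2)^{-1}\boldsymbol{V}.$$ Then, with $D:=\det(\boldsymbol{I}_M+(\boldsymbol{K}\boldsymbol{\Xi})^2)$, on any open set where $D\neq0$, $$p=p_0+\frac{D_x}{D}\quad(\text{i.e. } p=p_0+(\log D)_x),\qquad q=2\,\mathrm{tr}\big(\boldsymbol{S}\boldsymbol{K}\boldsymbol{\Xi}\,(\boldsymbol{I}_M+(\boldsymbol{K}\boldsymbol{\Xi})^2)^{-1}\big).$$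
   Context: $\boldsymbol{I}_M$ is the $M\times M$ identity matrix; $e^{(\cdot)}$ is the matrix exponential; $x,y$ are real variables and subscripts denote partial derivatives. *)

From HB Require Import structures.
From Stdlib Require Import Reals Lra ClassicalEpsilon FunctionalExtensionality.
From mathcomp Require Import all_boot all_algebra.

Set Implicit Arguments.
Unset Strict Implicit.
Unset Printing Implicit Defensive.

Record cplx := Cplx { re : Rdefinitions.R ; im : Rdefinitions.R }.

Definition cplx_eqb (z w : cplx) : bool :=
  if Req_EM_T (re z) (re w) then (if Req_EM_T (im z) (im w) then true else false) else false.

Lemma cplx_eqP : Equality.axiom cplx_eqb.
Proof.
move=> [a b] [c d]; rewrite /cplx_eqb /=.
case: (Req_EM_T a c) => [ha|h]; last by constructor => -[].
case: (Req_EM_T b d) => [hb|h]; last by constructor => -[].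
by constructor; rewrite ha hb.
Qed.
HB.instance Definition _ := hasDecEq.Build cplx cplx_eqP.

Definition cplx_find (P : pred cplx) (n : nat) : option cplx :=
  match excluded_middle_informative (exists x, P x) with
  | left h => Some (proj1_sig (constructive_indefinite_description _ h))
  | right _ => None
  end.

Lemma cplx_find_correct P n x : cplx_find P n = Some x -> P x.
Proof.
rewrite /cplx_find; case: excluded_middle_informative => // h [<-].
exact: proj2_sig (constructive_indefinite_description _ h).
Qed.

Lemma cplx_find_complete (P : pred cplx) : (exists x, P x) -> exists n, cplx_find P n.
Proof. by move=> h; exists 0%N; rewrite /cplx_find; case: excluded_middle_informative. Qed.

Lemma cplx_find_ext (P Q : pred cplx) : P =1 Q -> cplx_find P =1 cplx_find Q.
Proof. by move=> h; have -> : P = Q by apply: functional_extensionality. Qed.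

HB.instance Definition _ := hasChoice.Build cplx
  cplx_find_correct cplx_find_complete cplx_find_ext.

Definition cadd (z w : cplx) := Cplx (Rplus (re z) (re w)) (Rplus (im z) (im w)).
Definition copp (z : cplx) := Cplx (Ropp (re z)) (Ropp (im z)).
Definition czero := Cplx R0 R0.
Definition cone := Cplx R1 R0.
Definition cmul (z w : cplx) :=
  Cplx (Rminus (Rmult (re z) (re w)) (Rmult (im z) (im w)))
       (Rplus (Rmult (re z) (im w)) (Rmult (im z) (re w))).
Definition cnorm2 (z : cplx) := Rplus (Rmult (re z) (re z)) (Rmult (im z) (im z)).
Definition cinv (z : cplx) :=
  Cplx (Rdiv (re z) (cnorm2 z)) (Ropp (Rdiv (im z) (cnorm2 z))).

Lemma cplx_ext a b c d : a = c -> b = d -> Cplx a b = Cplx c d.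
Proof. by move=> -> ->. Qed.

Lemma caddA : associative cadd.
Proof. move=> [a b] [c d] [e f]; apply: cplx_ext => /=; ring. Qed.
Lemma caddC : commutative cadd.
Proof. move=> [a b] [c d]; apply: cplx_ext => /=; ring. Qed.
Lemma cadd0 : left_id czero cadd.
Proof. move=> [a b]; apply: cplx_ext => /=; ring. Qed.
Lemma caddN : left_inverse czero copp cadd.
Proof. move=> [a b]; apply: cplx_ext => /=; ring. Qed.

HB.instance Definition _ := GRing.isZmodule.Build cplx caddA caddC cadd0 caddN.

Lemma cmulA : associative cmul.
Proof. move=> [a b] [c d] [e f]; apply: cplx_ext => /=; ring. Qed.
Lemma cmulC : commutative cmul.
Proof. move=> [a b] [c d]; apply: cplx_ext => /=; ring. Qed.
Lemma cmul1 : left_id cone cmul.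
Proof. move=> [a b]; apply: cplx_ext => /=; ring. Qed.
Lemma cmulDl : left_distributive cmul cadd.
Proof. move=> [a b] [c d] [e f]; apply: cplx_ext => /=; ring. Qed.
Lemma cone_neq0 : cone != czero.
Proof.
apply/eqP => -[] h; by apply: R1_neq_R0.
Qed.

HB.instance Definition _ :=
  GRing.Zmodule_isComNzRing.Build cplx cmulA cmulC cmul1 cmulDl cone_neq0.

Lemma cmulV (z : cplx) : z != 0%R -> GRing.mul (cinv z) z = 1%R.
Proof.
case: z => a b nz.
have hn : Rplus (Rmult a a) (Rmult b b) <> R0.
  move=> h; move/eqP: nz; apply.
  have ha : a = R0 by nra.
  have hb : b = R0 by nra.
  by rewrite ha hb.
apply: cplx_ext; rewrite /= /cnorm2 /=; field; exact: hn.
Qed.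
Lemma cinv0 : cinv 0%R = 0%R.
Proof. apply: cplx_ext; rewrite /= /cnorm2 /Rdiv /=; ring. Qed.

HB.instance Definition _ := GRing.ComNzRing_isField.Build cplx cmulV cinv0.

Definition RtoC (r : Rdefinitions.R) : cplx := Cplx r R0.
Definition cabs (z : cplx) : Rdefinitions.R := sqrt (cnorm2 z).

Local Open Scope ring_scope.

Definition mxpow (M : nat) (A : 'M[cplx]_M) (k : nat) : 'M[cplx]_M :=
  iter k (mulmx A) 1%:M.

Definition mx_lim (m n : nat) (s : nat -> 'M[cplx]_(m, n)) (L : 'M[cplx]_(m, n)) :=
  forall i j (eps : Rdefinitions.R), Rlt R0 eps ->
    exists N : nat, forall k : nat, (N <= k)%N -> Rlt (cabs (s k i j - L i j)) eps.

Definition is_mexp (M : nat) (A E : 'M[cplx]_M) :=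
  mx_lim (fun N => \sum_(k < N) ((k`!)%:R)^-1 *: mxpow A k) E.

Definition mexp (M : nat) (A : 'M[cplx]_M) : 'M[cplx]_M :=
  match excluded_middle_informative (exists E, is_mexp A E) with
  | left h => proj1_sig (constructive_indefinite_description _ h)
  | right _ => 0
  end.

Definition has_pderiv_x (f : Rdefinitions.R -> Rdefinitions.R -> cplx)
  (x y : Rdefinitions.R) (L : cplx) :=
  forall eps : Rdefinitions.R, Rlt R0 eps -> exists delta : Rdefinitions.R, Rlt R0 delta /\
    forall h : Rdefinitions.R, h <> R0 -> Rlt (Rabs h) delta ->
      Rlt (cabs (RtoC (Rinv h) * (f (Rplus x h) y - f x y) - L)) eps.

Definition Xi (M : nat) (S : 'M[cplx]_M) (x y : Rdefinitions.R) : 'M[cplx]_M :=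
  mexp (- (RtoC x *: S + RtoC y *: invmx S)).

Definition Amat (M : nat) (S K : 'M[cplx]_M) (x y : Rdefinitions.R) : 'M[cplx]_M :=
  1%:M + (K *m Xi S x y) *m (K *m Xi S x y).

Definition Dfun (M : nat) (S K : 'M[cplx]_M) (x y : Rdefinitions.R) : cplx :=
  \det (Amat S K x y).

Definition qfun (M : nat) (S K : 'M[cplx]_M) (U : 'M[cplx]_(1, M)) (V : 'M[cplx]_(M, 1))
  (x y : Rdefinitions.R) : cplx :=
  (U *m Xi S x y *m invmx (Amat S K x y) *m V) ord0 ord0.

Definition pfun (M : nat) (S K : 'M[cplx]_M) (U : 'M[cplx]_(1, M)) (V : 'M[cplx]_(M, 1))
  (p0 : cplx) (x y : Rdefinitions.R) : cplx :=
  p0 - (U *m Xi S x y *m K *m Xi S x y *m invmx (Amat S K x y) *m V) ord0 ord0.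

(* Write P = K Xi and A = I + P^2.  Xi commutes with S, so Xi_x = -S Xi and
   A_x = -(P S P + P^2 S); Jacobi's formula gives D_x / D = tr (A_x A^-1).
   Since P commutes with A^-1, cyclicity of the trace and S K + K S = V U turn
   tr (A_x A^-1) into -U Xi K Xi A^-1 V, and U Xi A^-1 V into 2 tr (S K Xi A^-1).
   The analysis is done from scratch: the exponential series converges
   entrywise, exp (B + h C) = exp B + h C exp B + O(h^2) when B and C commute,
   and differentiability with an O(h^2) remainder is stable under sums and
   products, hence under determinants. *)

From HB Require Import structures.
From Stdlib Require Import Reals Lra Psatz ClassicalEpsilon Factorial.
From mathcomp Require Import all_boot all_algebra all_fingroup.
Set Implicit Arguments.
Unset Strict Implicit.
Import GRing.Theory.
Local Open Scope ring_scope.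
Delimit Scope R_scope with Re.

Ltac cplx_ring := apply: cplx_ext => /=; ring.

(* Used instead of the modulus [cabs] since it needs no square roots. *)
Definition cnorm1 (z : cplx) : R := (Rabs (re z) + Rabs (im z))%Re.

Lemma cnorm1_ge0 z : (0 <= cnorm1 z)%Re.
Proof. rewrite /cnorm1; have := Rabs_pos (re z); have := Rabs_pos (im z); lra. Qed.

Lemma cnorm1D z w : (cnorm1 (z + w)%R <= cnorm1 z + cnorm1 w)%Re.
Proof.
rewrite /cnorm1 /=.
have := Rabs_triang (re z) (re w); have := Rabs_triang (im z) (im w); lra.
Qed.

Lemma cnorm1N z : cnorm1 (- z) = cnorm1 z.
Proof. by rewrite /cnorm1 /= !Rabs_Ropp. Qed.

Lemma cnorm1B z w : (cnorm1 (z - w)%R <= cnorm1 z + cnorm1 w)%Re.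
Proof. by have := cnorm1D z (- w); rewrite cnorm1N. Qed.

Lemma cnorm1M z w : (cnorm1 (z * w)%R <= cnorm1 z * cnorm1 w)%Re.
Proof.
case: z w => [a b] [c d]; rewrite /cnorm1 /=.
have := Rabs_triang (a * c) (- (b * d)); have := Rabs_triang (a * d) (b * c).
rewrite Rabs_Ropp !Rabs_mult /Rminus.
have := Rabs_pos a; have := Rabs_pos b; have := Rabs_pos c; have := Rabs_pos d; nra.
Qed.

Lemma cnorm10 : cnorm1 0 = 0%Re.
Proof. rewrite /cnorm1 /= Rabs_R0; lra. Qed.

Lemma cnorm1_RtoCM r z : cnorm1 (RtoC r * z)%R = (Rabs r * cnorm1 z)%Re.
Proof.
rewrite /cnorm1 /= !Rmult_0_l Rminus_0_r Rplus_0_r !Rabs_mult; ring.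
Qed.

Lemma cnorm1_RtoC r : cnorm1 (RtoC r) = Rabs r.
Proof. by have := cnorm1_RtoCM r 1; rewrite mulr1 /cnorm1 /= Rabs_R1 Rabs_R0; lra. Qed.

Lemma Rabs_eq_R0 r : Rabs r = 0%Re -> r = 0%Re.
Proof. by move=> h; case: (Req_dec r 0%Re) => // /Rabs_no_R0. Qed.

Lemma cnorm1_eq0 z : cnorm1 z = 0%Re -> z = 0.
Proof.
case: z => a b; rewrite /cnorm1 /= => h.
have := Rabs_pos a; have := Rabs_pos b => hb ha.
apply: cplx_ext; apply: Rabs_eq_R0; lra.
Qed.

Lemma cabs_le_cnorm1 z : (cabs z <= cnorm1 z)%Re.
Proof.
case: z => a b; rewrite /cabs /cnorm1 /cnorm2 /=.
have ha := Rabs_pos a; have hb := Rabs_pos b.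
have ea : (a * a = Rabs a * Rabs a)%Re by rewrite -Rabs_mult Rabs_right; nra.
have eb : (b * b = Rabs b * Rabs b)%Re by rewrite -Rabs_mult Rabs_right; nra.
rewrite -(sqrt_Rsqr (Rabs a + Rabs b)) /Rsqr; last lra.
apply: sqrt_le_1; nra.
Qed.

Lemma cnorm1_le_cabs z : (cnorm1 z <= 2 * cabs z)%Re.
Proof.
case: z => a b; rewrite /cabs /cnorm1 /cnorm2 /=.
have ha : (Rabs a <= sqrt (a * a + b * b))%Re.
  rewrite -sqrt_Rsqr_abs; apply: sqrt_le_1; rewrite /Rsqr; nra.
have hb : (Rabs b <= sqrt (a * a + b * b))%Re.
  rewrite -sqrt_Rsqr_abs; apply: sqrt_le_1; rewrite /Rsqr; nra.
lra.
Qed.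

Lemma cnorm1_sum k (F : 'I_k -> cplx) r :
  (forall i, cnorm1 (F i) <= r)%Re -> (cnorm1 (\sum_(i < k) F i)%R <= INR k * r)%Re.
Proof.
elim: k F => [|k IH] F hF; first by rewrite big_ord0 cnorm10 /=; lra.
rewrite big_ord_recr S_INR Rmult_plus_distr_r Rmult_1_l.
apply: Rle_trans (cnorm1D _ _) _; apply: Rplus_le_compat; [exact: IH | exact: hF].
Qed.

Lemma RtoCD a b : RtoC (a + b)%Re = RtoC a + RtoC b.
Proof. cplx_ring. Qed.

Lemma RtoCM a b : RtoC (a * b)%Re = RtoC a * RtoC b.
Proof. cplx_ring. Qed.

Lemma RtoC_natr k : (k%:R : cplx) = RtoC (INR k).
Proof. by elim: k => [|k IH]; [cplx_ring | rewrite mulrS IH S_INR RtoCD addrC]. Qed.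

Lemma RtoCV r : (r <> 0)%Re -> RtoC (/ r)%Re = (RtoC r)^-1.
Proof.
move=> hr; have hr' : RtoC r != 0 by apply/eqP => -[].
by apply: (mulIf hr'); rewrite mulVf // -RtoCM Rinv_l.
Qed.

Definition mxbound m n (A : 'M[cplx]_(m, n)) (r : R) := forall i j, (cnorm1 (A i j) <= r)%Re.

Lemma mxbound_le m n (A : 'M[cplx]_(m, n)) r r' : mxbound A r -> (r <= r')%Re -> mxbound A r'.
Proof. by move=> hA h i j; apply: Rle_trans h. Qed.

Lemma mxboundD m n (A B : 'M[cplx]_(m, n)) r s :
  mxbound A r -> mxbound B s -> mxbound (A + B) (r + s)%Re.
Proof. move=> hA hB i j; rewrite mxE; apply: Rle_trans (cnorm1D _ _) _; exact: Rplus_le_compat. Qed.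

Lemma mxboundZ m n (A : 'M[cplx]_(m, n)) c r :
  (0 <= r)%Re -> mxbound A r -> mxbound (c *: A) (cnorm1 c * r)%Re.
Proof.
move=> r0 hA i j; rewrite mxE; apply: Rle_trans (cnorm1M _ _) _.
exact: Rmult_le_compat_l (cnorm1_ge0 c) (hA i j).
Qed.

Lemma mxbound0 {m n} : mxbound (0 : 'M[cplx]_(m, n)) 0%Re.
Proof. by move=> i j; rewrite mxE cnorm10; lra. Qed.

Lemma mxbound1 m : mxbound (1%:M : 'M[cplx]_m) 1%Re.
Proof.
move=> i j; rewrite mxE; case: (i == j) => /=; last by rewrite cnorm10; lra.
by rewrite -[1](mulr1) -/(RtoC 1%Re) cnorm1_RtoCM cnorm1_RtoC Rabs_R1; lra.
Qed.

Lemma mxboundM m n p (A : 'M[cplx]_(m, n)) (B : 'M[cplx]_(n, p)) r s :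
  (0 <= r)%Re -> (0 <= s)%Re -> mxbound A r -> mxbound B s ->
  mxbound (A *m B) (INR n * (r * s))%Re.
Proof.
move=> r0 s0 hA hB i j; rewrite mxE; apply: cnorm1_sum => k.
apply: Rle_trans (cnorm1M _ _) _.
apply: Rmult_le_compat; [exact: cnorm1_ge0 | exact: cnorm1_ge0 | exact: hA | exact: hB].
Qed.

Lemma Rmax_big_ge (T : eqType) (s : seq T) (f : T -> R) x :
  x \in s -> (f x <= \big[Rmax/0%Re]_(y <- s) f y)%Re.
Proof.
elim: s => [//|y s IH]; rewrite in_cons big_cons => /orP [/eqP ->|/IH h].
  exact: Rmax_l.
exact: Rle_trans h (Rmax_r _ _).
Qed.

Lemma mxbound_exists m n (A : 'M[cplx]_(m, n)) : exists2 r, (0 <= r)%Re & mxbound A r.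
Proof.
pose rowmax i := \big[Rmax/0%Re]_(j <- index_enum 'I_n) cnorm1 (A i j).
exists (Rmax 0 (\big[Rmax/0%Re]_(i <- index_enum 'I_m) rowmax i)); first exact: Rmax_l.
move=> i j; apply: Rle_trans (Rmax_r _ _).
apply: Rle_trans (Rmax_big_ge rowmax (mem_index_enum i)).
exact: (Rmax_big_ge (fun j => cnorm1 (A i j)) (mem_index_enum j)).
Qed.

Lemma mxpowS m (A : 'M[cplx]_m) k : mxpow A k.+1 = A *m mxpow A k.
Proof. by []. Qed.

Lemma mxpow0 m (A : 'M[cplx]_m) : mxpow A 0 = 1%:M.
Proof. by []. Qed.

Lemma mxbound_pow m (A : 'M[cplx]_m) r k :
  (0 <= r)%Re -> mxbound A r -> mxbound (mxpow A k) ((INR m * r) ^ k)%Re.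
Proof.
move=> r0 hA; have mr0 : (0 <= INR m * r)%Re by apply: Rmult_le_pos; [exact: pos_INR|].
elim: k => [|k IH]; first exact: mxbound1.
apply: (mxbound_le (mxboundM r0 (pow_le _ k mr0) hA IH)); right => /=; ring.
Qed.

Lemma mxpow_commute m (S B : 'M[cplx]_m) k :
  S *m B = B *m S -> S *m mxpow B k = mxpow B k *m S.
Proof.
move=> h; elim: k => [|k IH]; first by rewrite mxpow0 mulmx1 mul1mx.
by rewrite mxpowS mulmxA h -mulmxA IH mulmxA.
Qed.

(** * Convergence of the exponential series *)

Fixpoint exp_psum (a : R) (N : nat) : R :=
  if N is N'.+1 then (exp_psum a N' + a ^ N' / INR (fact N'))%Re else 0%Re.

Lemma exp_psumE a N : exp_psum a N.+1 = E1 a N.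
Proof.
elim: N => [|N IH]; first by rewrite /E1 /= /Rdiv; ring.
change (exp_psum a N.+2) with (exp_psum a N.+1 + a ^ N.+1 / INR (fact N.+1))%Re.
by rewrite IH /E1 tech5 /Rdiv Rmult_comm.
Qed.

Lemma exp_psum_le_exp a N : (0 <= a)%Re -> (exp_psum a N <= exp a)%Re.
Proof.
move=> ha; case: N => [|N]; first by left; exact: exp_pos.
rewrite exp_psumE; apply: growing_ineq; last exact: E1_cvg.
move=> n; rewrite -!exp_psumE.
change (exp_psum a n.+2) with (exp_psum a n.+1 + a ^ n.+1 / INR (fact n.+1))%Re.
have : (0 <= a ^ n.+1 / INR (fact n.+1))%Re.
  by apply: Rmult_le_pos; [exact: pow_le | left; apply: Rinv_0_lt_compat; exact: INR_fact_lt_0].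
lra.
Qed.

Lemma exp_psum_cauchy a eps : (0 < eps)%Re ->
  exists N, forall n k, (N <= n)%N -> (n <= k)%N -> (exp_psum a k - exp_psum a n < eps)%Re.
Proof.
move=> he; have [N hN] := CV_Cauchy (E1 a) (exist _ (exp a) (E1_cvg a)) eps he.
exists N.+1 => -[|n] [|k] // hn hk; rewrite !exp_psumE.
apply: Rle_lt_trans (Rle_abs _) _.
by apply: hN; apply/leP => //; apply: leq_trans hn hk.
Qed.

Lemma invfact_RtoC k : ((k`!)%:R : cplx)^-1 = RtoC (/ INR (fact k))%Re.
Proof.
have -> : k`! = fact k by elim: k => // k IH; rewrite factS IH.
by rewrite RtoC_natr RtoCV //; exact: INR_fact_neq_0.
Qed.

Lemma cnorm1_invfact k : cnorm1 (((k`!)%:R : cplx)^-1) = (/ INR (fact k))%Re.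
Proof.
rewrite invfact_RtoC cnorm1_RtoC Rabs_pos_eq //.
by left; apply: Rinv_0_lt_compat; exact: INR_fact_lt_0.
Qed.

Definition mexp_psum m (A : 'M[cplx]_m) (N : nat) : 'M[cplx]_m :=
  \sum_(k < N) ((k`!)%:R)^-1 *: mxpow A k.

Lemma mexp_psumS m (A : 'M[cplx]_m) N :
  mexp_psum A N.+1 = mexp_psum A N + ((N`!)%:R)^-1 *: mxpow A N.
Proof. by rewrite /mexp_psum big_ord_recr. Qed.

Lemma mexp_psum0 m (A : 'M[cplx]_m) : mexp_psum A 0 = 0.
Proof. by rewrite /mexp_psum big_ord0. Qed.

Lemma mxbound_mexp_psumB m (A : 'M[cplx]_m) r n k :
  (0 <= r)%Re -> mxbound A r -> (n <= k)%N ->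
  mxbound (mexp_psum A k - mexp_psum A n)
          (exp_psum (INR m * r) k - exp_psum (INR m * r) n)%Re.
Proof.
move=> r0 hA /subnKC <-; set a := (INR m * r)%Re.
have a0 : (0 <= a)%Re by apply: Rmult_le_pos; [exact: pos_INR|].
elim: (k - n)%N => [|d IH]; first by rewrite addn0 subrr Rminus_diag; exact: mxbound0.
rewrite addnS mexp_psumS addrAC /=.
have -> : (exp_psum a (n + d) + a ^ (n + d) / INR (fact (n + d)) - exp_psum a n =
    exp_psum a (n + d) - exp_psum a n + / INR (fact (n + d)) * a ^ (n + d))%Re.
  by rewrite /Rdiv; ring.
apply: mxboundD IH _; rewrite -cnorm1_invfact.
exact: mxboundZ (pow_le _ _ a0) (mxbound_pow _ r0 hA).
Qed.

Lemma cplx_cauchy_cvg (s : nat -> cplx) :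
  (forall eps, (0 < eps)%Re -> exists N, forall n k, (N <= n)%N -> (n <= k)%N ->
     (cnorm1 (s k - s n)%R < eps)%Re) ->
  exists L, forall eps, (0 < eps)%Re -> exists N, forall k, (N <= k)%N ->
     (cabs (s k - L)%R < eps)%Re.
Proof.
move=> H.
have part_cauchy (f : cplx -> R) :
    (forall z w, Rabs (f z - f w) <= cnorm1 (z - w)%R)%Re -> Cauchy_crit (fun k => f (s k)).
  move=> hf eps /H [N hN]; exists N => n k /leP hn /leP hk; rewrite /R_dist.
  case: (leqP n k) => [hnk|/ltnW hkn].
    by rewrite Rabs_minus_sym; apply: Rle_lt_trans (hf _ _) (hN _ _ hn hnk).
  exact: Rle_lt_trans (hf _ _) (hN _ _ hk hkn).
have [lr hlr] : {lr | Un_cv (fun k => re (s k)) lr}.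
  apply: R_complete; apply: part_cauchy => z w; rewrite /cnorm1 /= /Rminus.
  have := Rabs_pos (im z + - im w); lra.
have [li hli] : {li | Un_cv (fun k => im (s k)) li}.
  apply: R_complete; apply: part_cauchy => z w; rewrite /cnorm1 /= /Rminus.
  have := Rabs_pos (re z + - re w); lra.
exists (Cplx lr li) => eps he.
have [N1 h1] := hlr _ (ltac:(lra) : (0 < eps / 2)%Re).
have [N2 h2] := hli _ (ltac:(lra) : (0 < eps / 2)%Re).
exists (maxn N1 N2) => k; rewrite geq_max => /andP [/leP hk1 /leP hk2].
apply: Rle_lt_trans (cabs_le_cnorm1 _) _.
have := h1 k hk1; have := h2 k hk2; rewrite /R_dist /cnorm1 /= /Rminus; lra.
Qed.

Lemma mexp_exists m (A : 'M[cplx]_m) : exists E, is_mexp A E.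
Proof.
have [r r0 hA] := mxbound_exists A.
have H i j : exists L, forall eps, (0 < eps)%Re -> exists N, forall k, (N <= k)%N ->
    (cabs (mexp_psum A k i j - L)%R < eps)%Re.
  apply: cplx_cauchy_cvg => eps /(exp_psum_cauchy (INR m * r)) [N hN].
  exists N => n k hn hk; apply: Rle_lt_trans (hN n k hn hk).
  by have := mxbound_mexp_psumB r0 hA hk i j; rewrite !mxE.
exists (\matrix_(i, j) proj1_sig (constructive_indefinite_description _ (H i j))).
move=> i j; rewrite mxE; exact: proj2_sig (constructive_indefinite_description _ (H i j)).
Qed.

Lemma mexp_spec m (A : 'M[cplx]_m) : is_mexp A (mexp A).
Proof.
rewrite /mexp; case: excluded_middle_informative => [h|[]]; last exact: mexp_exists.
exact: proj2_sig (constructive_indefinite_description _ h).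
Qed.

Definition ccvg (s : nat -> cplx) (L : cplx) :=
  forall eps, (0 < eps)%Re -> exists N, forall k, (N <= k)%N -> (cnorm1 (s k - L)%R < eps)%Re.

Lemma ccvg_ext s t L : (forall k, s k = t k) -> ccvg s L -> ccvg t L.
Proof. by move=> e H eps /H [N hN]; exists N => k; rewrite -e; exact: hN. Qed.

Lemma ccvg_cst c : ccvg (fun _ => c) c.
Proof. by move=> eps he; exists 0%N => k _; rewrite subrr cnorm10. Qed.

Lemma ccvgD s t a b : ccvg s a -> ccvg t b -> ccvg (fun k => s k + t k) (a + b).
Proof.
move=> Hs Ht eps he.
have [N1 h1] := Hs _ (ltac:(lra) : (0 < eps / 2)%Re).
have [N2 h2] := Ht _ (ltac:(lra) : (0 < eps / 2)%Re).
exists (maxn N1 N2) => k; rewrite geq_max => /andP [/h1 hk1 /h2 hk2].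
have -> : s k + t k - (a + b) = (s k - a) + (t k - b) by cplx_ring.
apply: Rle_lt_trans (cnorm1D _ _) _; lra.
Qed.

Lemma ccvgN s a : ccvg s a -> ccvg (fun k => - s k) (- a).
Proof. by move=> H eps /H [N hN]; exists N => k /hN; rewrite -opprD cnorm1N. Qed.

Lemma ccvgMl c s a : ccvg s a -> ccvg (fun k => c * s k) (c * a).
Proof.
move=> H eps he; have hc := cnorm1_ge0 c.
have hy : (0 < eps / (cnorm1 c + 1))%Re by apply: Rdiv_lt_0_compat; lra.
have [N hN] := H _ hy; exists N => k /hN /Rlt_le hk.
rewrite -mulrBr; apply: Rle_lt_trans (cnorm1M _ _) _.
apply: Rle_lt_trans (Rmult_le_compat_l _ _ _ hc hk) _.
rewrite {2}(_ : eps = (cnorm1 c + 1) * (eps / (cnorm1 c + 1)))%Re; last by field; lra.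
apply: Rmult_lt_compat_r => //; lra.
Qed.

Lemma ccvgMr c s a : ccvg s a -> ccvg (fun k => s k * c) (a * c).
Proof. by move=> /(ccvgMl c); rewrite mulrC; apply: ccvg_ext => k; rewrite mulrC. Qed.

Lemma ccvg_sum (I : Type) (r : seq I) (F : I -> nat -> cplx) L :
  (forall i, ccvg (F i) (L i)) -> ccvg (fun k => \sum_(i <- r) F i k) (\sum_(i <- r) L i).
Proof.
move=> H; elim: r => [|x r IH].
  by rewrite big_nil; apply: ccvg_ext (ccvg_cst 0) => k; rewrite big_nil.
by rewrite big_cons; apply: ccvg_ext (ccvgD (H x) IH) => k; rewrite big_cons.
Qed.

Lemma ccvg_shift s a : ccvg s a -> ccvg (fun k => s k.+1) a.
Proof. by move=> H eps /H [N hN]; exists N => k hk; apply: hN; exact: leqW. Qed.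

Lemma ccvg_uniq s a b : ccvg s a -> ccvg s b -> a = b.
Proof.
move=> Ha Hb; apply/eqP; rewrite -subr_eq0; apply/eqP/cnorm1_eq0.
have := cnorm1_ge0 (a - b); case=> [hp|//].
have [N1 h1] := Ha _ (ltac:(lra) : (0 < cnorm1 (a - b)%R / 2)%Re).
have [N2 h2] := Hb _ (ltac:(lra) : (0 < cnorm1 (a - b)%R / 2)%Re).
pose k := maxn N1 N2; have := h1 k (leq_maxl _ _); have := h2 k (leq_maxr _ _).
have e : (s k - b) - (s k - a) = a - b by cplx_ring.
have := cnorm1B (s k - b) (s k - a); rewrite e; lra.
Qed.

Lemma ccvg_le s a r : (forall k, cnorm1 (s k) <= r)%Re -> ccvg s a -> (cnorm1 a <= r)%Re.
Proof.
move=> hr H; case: (Rle_lt_dec (cnorm1 a) r) => // hlt.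
have [N hN] := H _ (ltac:(lra) : (0 < cnorm1 a - r)%Re).
have e : s N - (s N - a) = a by rewrite opprB addrC subrK.
have := cnorm1B (s N) (s N - a); rewrite e.
have := hN N (leqnn N); have := hr N; lra.
Qed.

Definition mxcvg m n (s : nat -> 'M[cplx]_(m, n)) (L : 'M[cplx]_(m, n)) :=
  forall i j, ccvg (fun k => s k i j) (L i j).

Lemma mxcvg_mexp m (A : 'M[cplx]_m) : mxcvg (mexp_psum A) (mexp A).
Proof.
move=> i j eps he; have [N hN] := mexp_spec A i j (ltac:(lra) : (0 < eps / 2)%Re).
exists N => k /hN hk; apply: Rle_lt_trans (cnorm1_le_cabs _) _.
apply: (@Rlt_le_trans _ (2 * (eps / 2))%Re); last lra.
by apply: Rmult_lt_compat_l; [lra | exact: hk].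
Qed.

Lemma mxcvgD m n (s t : nat -> 'M[cplx]_(m, n)) L1 L2 :
  mxcvg s L1 -> mxcvg t L2 -> mxcvg (fun k => s k + t k) (L1 + L2).
Proof. by move=> H1 H2 i j; rewrite mxE; apply: ccvg_ext (ccvgD (H1 i j) (H2 i j)) => k; rewrite mxE. Qed.

Lemma mxcvgN m n (s : nat -> 'M[cplx]_(m, n)) L : mxcvg s L -> mxcvg (fun k => - s k) (- L).
Proof. by move=> H i j; rewrite mxE; apply: ccvg_ext (ccvgN (H i j)) => k; rewrite mxE. Qed.

Lemma mxcvgZ m n c (s : nat -> 'M[cplx]_(m, n)) L :
  mxcvg s L -> mxcvg (fun k => c *: s k) (c *: L).
Proof. by move=> H i j; rewrite mxE; apply: ccvg_ext (ccvgMl c (H i j)) => k; rewrite mxE. Qed.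

Lemma mxcvg_mull m n p (C : 'M[cplx]_(m, n)) (s : nat -> 'M[cplx]_(n, p)) L :
  mxcvg s L -> mxcvg (fun k => C *m s k) (C *m L).
Proof.
move=> H i j; rewrite mxE.
by apply: ccvg_ext (ccvg_sum _ (fun l => ccvgMl (C i l) (H l j))) => k; rewrite mxE.
Qed.

Lemma mxcvg_mulr m n p (C : 'M[cplx]_(n, p)) (s : nat -> 'M[cplx]_(m, n)) L :
  mxcvg s L -> mxcvg (fun k => s k *m C) (L *m C).
Proof.
move=> H i j; rewrite mxE.
by apply: ccvg_ext (ccvg_sum _ (fun l => ccvgMr (C l j) (H i l))) => k; rewrite mxE.
Qed.

Lemma mxcvg_shift m n (s : nat -> 'M[cplx]_(m, n)) L : mxcvg s L -> mxcvg (fun k => s k.+1) L.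
Proof. by move=> H i j; exact: ccvg_shift (H i j). Qed.

Lemma mxcvg_uniq m n (s : nat -> 'M[cplx]_(m, n)) L1 L2 : mxcvg s L1 -> mxcvg s L2 -> L1 = L2.
Proof. by move=> H1 H2; apply/matrixP => i j; exact: ccvg_uniq (H1 i j) (H2 i j). Qed.

Lemma mxcvg_bound m n (s : nat -> 'M[cplx]_(m, n)) L r :
  (forall k, mxbound (s k) r) -> mxcvg s L -> mxbound L r.
Proof. by move=> hr H i j; apply: ccvg_le (H i j) => k; exact: hr. Qed.

Lemma mexp_psum_commute m (S B : 'M[cplx]_m) N :
  S *m B = B *m S -> S *m mexp_psum B N = mexp_psum B N *m S.
Proof.
move=> h; rewrite /mexp_psum mulmx_sumr mulmx_suml; apply: eq_bigr => k _.
by rewrite -scalemxAr -scalemxAl mxpow_commute.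
Qed.

Lemma mexp_commute m (S B : 'M[cplx]_m) : S *m B = B *m S -> S *m mexp B = mexp B *m S.
Proof.
move=> h; apply: mxcvg_uniq (mxcvg_mull S (mxcvg_mexp B)) _ => i j.
by apply: ccvg_ext (mxcvg_mulr S (mxcvg_mexp B) i j) => k; rewrite mexp_psum_commute.
Qed.

(** * First-order expansion of the matrix exponential *)

Lemma pow_defect_ineq (e r : R) k : (0 <= e)%Re -> (0 <= r)%Re ->
  ((2 * r) * (e * INR k ^ 2 * (2 * r + 1) ^ k) + e * INR k * (r * r * r ^ k.-1)
   <= e * INR k.+1 ^ 2 * (2 * r + 1) ^ k.+1)%Re.
Proof.
move=> e0 r0; set a := (2 * r + 1)%Re.
have a0 : (0 <= a)%Re by rewrite /a; lra.
have hA : (0 <= a ^ k)%Re by exact: pow_le.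
have hK := pos_INR k.
have hS : (e * INR k * (r * r * r ^ k.-1) <= e * INR k * (a * a ^ k))%Re.
  case: k hK hA => [|k] hK hA; first by rewrite /=; lra.
  apply: Rmult_le_compat_l; first exact: Rmult_le_pos.
  have : (r ^ k.+2 <= a ^ k.+2)%Re by apply: pow_incr; rewrite /a; lra.
  by rewrite /=; lra.
have : (0 <= e * a ^ k * (INR k * INR k + INR k * a + a))%Re.
  by apply: Rmult_le_pos; [exact: Rmult_le_pos | nra].
have -> : (2 * r = a - 1)%Re by rewrite /a; ring.
rewrite S_INR [(a ^ k.+1)%Re]/=; nra.
Qed.

Lemma INR_sqr_le_pow4 k : (INR k ^ 2 <= 4 ^ k)%Re.
Proof.
have h2 : (INR k <= 2 ^ k)%Re.
  elim: k => [|k IH]; first by rewrite /=; lra.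
  rewrite S_INR /=; have : (1 <= 2 ^ k)%Re by apply: pow_R1_Rle; lra.
  lra.
rewrite (_ : 4 = 2 * 2)%Re ?Rpow_mult_distr; last ring.
have := pos_INR k; rewrite /=; nra.
Qed.

Section ExpFirstOrder.
Variables (m : nat) (B C : 'M[cplx]_m) (h w : R).
Hypotheses (hBC : C *m B = B *m C) (w0 : (0 <= w)%Re)
  (hB : mxbound B w) (hC : mxbound C w) (h1 : (Rabs h <= 1)%Re).

Let X := B + RtoC h *: C.
Let r := (INR m * w)%Re.
(* Multiplying by [X], whose entries are bounded by [2 w], scales entry bounds by [a - 1]. *)
Let a := (2 * r + 1)%Re.

Definition pow_defect k :=
  mxpow X k - mxpow B k - (RtoC h * k%:R) *: (C *m mxpow B k.-1).

Lemma pow_defect0 : pow_defect 0 = 0.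
Proof. by rewrite /pow_defect mulr0 scale0r subr0 subrr. Qed.

Lemma pow_defectS k :
  pow_defect k.+1 = X *m pow_defect k + (RtoC h * RtoC h * k%:R) *: (C *m C *m mxpow B k.-1).
Proof.
case: k => [|k].
  rewrite pow_defect0 mulmx0 mulr0 scale0r addr0 /pow_defect !mxpowS !mxpow0 !mulmx1 mulr1 /X.
  by rewrite (addrC B) addrK subrr.
rewrite /pow_defect [mxpow X k.+2]mxpowS [mxpow B k.+2]mxpowS [k.+2.-1]/= mxpowS.
rewrite !mulmxBr -scalemxAr -mulmxA.
have -> : X *m (B *m mxpow B k) = B *m (B *m mxpow B k) + RtoC h *: (C *m (B *m mxpow B k)).
  by rewrite /X mulmxDl -scalemxAl.
have -> : X *m (C *m mxpow B k) = C *m (B *m mxpow B k) + RtoC h *: (C *m (C *m mxpow B k)).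
  by rewrite /X mulmxDl -scalemxAl !mulmxA hBC.
rewrite !RtoC_natr (S_INR k.+1) RtoCD [in LHS]mxpowS [k.+1.-1]/=.
set T1 := X *m _; set T2 := B *m _; set T3 := C *m (B *m _); set T4 := C *m (C *m _).
by apply/matrixP => i j; rewrite !mxE; cplx_ring.
Qed.

Lemma mxbound_pow_defect k : mxbound (pow_defect k) (h ^ 2 * INR k ^ 2 * a ^ k)%Re.
Proof.
have r0 : (0 <= r)%Re by apply: Rmult_le_pos; [exact: pos_INR|].
have e0 := pow2_ge_0 h.
elim: k => [|k IH].
  by rewrite pow_defect0; apply: (mxbound_le mxbound0); rewrite /=; lra.
have hX : mxbound X (2 * w)%Re.
  apply: (mxbound_le (mxboundD hB (mxboundZ (RtoC h) w0 hC))).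
  by rewrite cnorm1_RtoC; nra.
have d0 : (0 <= h ^ 2 * INR k ^ 2 * a ^ k)%Re.
  apply: Rmult_le_pos; last by apply: pow_le; rewrite /a; lra.
  by apply: Rmult_le_pos => //; apply: pow_le; exact: pos_INR.
have hCCB := mxboundM (Rmult_le_pos _ _ (pos_INR m) (Rmult_le_pos _ _ w0 w0)) (pow_le _ k.-1 r0)
  (mxboundM w0 w0 hC hC) (mxbound_pow k.-1 w0 hB).
have c0 : (0 <= INR m * (INR m * (w * w) * r ^ k.-1))%Re.
  apply: Rmult_le_pos; [exact: pos_INR | apply: Rmult_le_pos; last exact: pow_le].
  by apply: Rmult_le_pos; [exact: pos_INR | nra].
have w2 : (0 <= 2 * w)%Re by lra.
rewrite pow_defectS; apply: (mxbound_le (mxboundD (mxboundM w2 d0 hX IH) (mxboundZ _ c0 hCCB))).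
rewrite RtoC_natr -!RtoCM cnorm1_RtoC Rabs_pos_eq; last by have := pos_INR k; nra.
have -> : (INR m * (2 * w * (h ^ 2 * INR k ^ 2 * a ^ k)) =
  2 * r * (h ^ 2 * INR k ^ 2 * a ^ k))%Re by rewrite /r; ring.
have -> : (h * h * INR k * (INR m * (INR m * (w * w) * r ^ k.-1)) =
  h ^ 2 * INR k * (r * r * r ^ k.-1))%Re by rewrite /r; ring.
exact: pow_defect_ineq.
Qed.

(* The series of [C *m mexp B] lags one term behind that of [mexp X]. *)
Definition exp_defect N :=
  mexp_psum X N.+1 - mexp_psum B N.+1 - RtoC h *: (C *m mexp_psum B N).

Lemma exp_defect0 : exp_defect 0 = 0.
Proof. by rewrite /exp_defect !mexp_psumS !mexp_psum0 !add0r mulmx0 scaler0 subr0 !mxpow0 subrr. Qed.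

Lemma exp_defectS N :
  exp_defect N.+1 = exp_defect N + ((N.+1)`!%:R)^-1 *: pow_defect N.+1.
Proof.
rewrite /exp_defect /pow_defect (mexp_psumS X N.+1) (mexp_psumS B N.+1) (mexp_psumS B N).
rewrite mulmxDr -scalemxAr [N.+1.-1]/= !invfact_RtoC RtoC_natr.
have -> : (/ INR (fact N) = / INR (fact N.+1) * INR N.+1)%Re.
  change (fact N.+1) with (N.+1 * fact N)%coq_nat; rewrite mult_INR; field.
  by split; [exact: INR_fact_neq_0 | exact: not_0_INR].
set P1 := mexp_psum X _; set P2 := mexp_psum B _; set Q := C *m mexp_psum B _.
set T1 := mxpow X _; set T2 := mxpow B N; set T3 := mxpow B _; set T4 := C *m _.
by apply/matrixP => i j; rewrite !mxE; cplx_ring.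
Qed.

Lemma mxbound_exp_defect N : mxbound (exp_defect N) (h ^ 2 * exp_psum (4 * a) N.+1)%Re.
Proof.
have a0 : (0 <= a)%Re by rewrite /a /r; have := pos_INR m; nra.
have e0 := pow2_ge_0 h.
elim: N => [|N IH].
  by rewrite exp_defect0; apply: (mxbound_le mxbound0); rewrite /=; nra.
have d0 : (0 <= h ^ 2 * INR N.+1 ^ 2 * a ^ N.+1)%Re.
  by apply: Rmult_le_pos; [apply: Rmult_le_pos => //; apply: pow_le; exact: pos_INR | exact: pow_le].
rewrite exp_defectS; apply: (mxbound_le (mxboundD IH (mxboundZ _ d0 (mxbound_pow_defect N.+1)))).
rewrite cnorm1_invfact.
change (exp_psum (4 * a) N.+2)
  with (exp_psum (4 * a) N.+1 + (4 * a) ^ N.+1 / INR (fact N.+1))%Re.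
have f0 : (0 < / INR (fact N.+1))%Re by apply: Rinv_0_lt_compat; exact: INR_fact_lt_0.
have := INR_sqr_le_pow4 N.+1; have := pow_le _ N.+1 a0.
rewrite Rpow_mult_distr /Rdiv; set P := (a ^ N.+1)%Re; set Q := (INR N.+1 ^ 2)%Re.
move=> P0 hQ.
have : (0 <= h ^ 2 * P * / INR (fact N.+1) * (4 ^ N.+1 - Q))%Re.
  by apply: Rmult_le_pos; [apply: Rmult_le_pos; [nra|lra] | lra].
nra.
Qed.

Lemma mexp_first_order :
  mxbound (mexp X - mexp B - RtoC h *: (C *m mexp B)) (h ^ 2 * exp (4 * a))%Re.
Proof.
have a0 : (0 <= 4 * a)%Re by rewrite /a /r; have := pos_INR m; nra.
have lim := mxcvgD (mxcvgD (mxcvg_shift (mxcvg_mexp X)) (mxcvgN (mxcvg_shift (mxcvg_mexp B))))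
  (mxcvgN (mxcvgZ (RtoC h) (mxcvg_mull C (mxcvg_mexp B)))).
apply: mxcvg_bound lim => N; apply: (mxbound_le (mxbound_exp_defect N)).
by apply: Rmult_le_compat_l; [exact: pow2_ge_0 | exact: exp_psum_le_exp].
Qed.

End ExpFirstOrder.

(** * Differentiability with a quadratic remainder *)

(* [f h = f 0 + h d + O(h^2)]: stronger than differentiability at [0], and
   closed under products with no continuity bookkeeping. *)
Definition qdiff (f : R -> cplx) (d : cplx) :=
  exists K del, (0 < del)%Re /\ (0 <= K)%Re /\
    forall h, (Rabs h < del)%Re -> (cnorm1 (f h - f 0%Re - RtoC h * d)%R <= K * h ^ 2)%Re.

Lemma qdiff_ext f g d d' : (forall h, f h = g h) -> d = d' -> qdiff f d -> qdiff g d'.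
Proof.
move=> e <- [K [del [del0 [K0 H]]]]; exists K, del; split=> //; split=> // h.
by rewrite -!e; exact: H.
Qed.

Lemma qdiff_cst c : qdiff (fun _ => c) 0.
Proof.
exists 0%Re, 1%Re; split; first lra; split; first lra.
by move=> h _; rewrite subrr mulr0 subr0 cnorm10; right; ring.
Qed.

Lemma qdiffD f g d1 d2 : qdiff f d1 -> qdiff g d2 -> qdiff (fun h => f h + g h) (d1 + d2).
Proof.
move=> [K1 [e1 [e10 [K10 H1]]]] [K2 [e2 [e20 [K20 H2]]]].
exists (K1 + K2)%Re, (Rmin e1 e2); split; first exact: Rmin_pos; split; first lra.
move=> h /Rmin_Rgt [/H1 hf /H2 hg].
have -> : f h + g h - (f 0%Re + g 0%Re) - RtoC h * (d1 + d2) =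
  (f h - f 0%Re - RtoC h * d1) + (g h - g 0%Re - RtoC h * d2) by cplx_ring.
apply: Rle_trans (cnorm1D _ _) _; lra.
Qed.

Lemma qdiff_lipschitz f d : qdiff f d -> exists L del, (0 < del)%Re /\ (0 <= L)%Re /\
  forall h, (Rabs h < del)%Re -> (cnorm1 (f h - f 0%Re)%R <= L * Rabs h)%Re.
Proof.
move=> [K [del [del0 [K0 H]]]]; have d0 := cnorm1_ge0 d.
exists (K + cnorm1 d)%Re, (Rmin 1 del); split; first by apply: Rmin_pos; lra.
split; first lra.
move=> h /Rmin_Rgt [h1 /H hf].
have hh : (h ^ 2 <= Rabs h)%Re.
  by rewrite -Rsqr_pow2 Rsqr_abs /Rsqr; have := Rabs_pos h; nra.
have -> : f h - f 0%Re = (f h - f 0%Re - RtoC h * d) + RtoC h * d by rewrite subrK.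
apply: Rle_trans (cnorm1D _ _) _; rewrite cnorm1_RtoCM; nra.
Qed.

Lemma qdiffM f g d1 d2 : qdiff f d1 -> qdiff g d2 ->
  qdiff (fun h => f h * g h) (d1 * g 0%Re + f 0%Re * d2).
Proof.
move=> hf hg; have [K1 [e1 [e10 [K10 H1]]]] := hf; have [K2 [e2 [e20 [K20 H2]]]] := hg.
have [L1 [l1 [l10 [L10 Hf]]]] := qdiff_lipschitz hf.
have [L2 [l2 [l20 [L20 Hg]]]] := qdiff_lipschitz hg.
set f0 := f 0%Re; set g0 := g 0%Re.
have f00 := cnorm1_ge0 f0; have g00 := cnorm1_ge0 g0.
exists (cnorm1 f0 * K2 + cnorm1 g0 * K1 + L1 * L2)%Re, (Rmin (Rmin e1 e2) (Rmin l1 l2)).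
split; first by apply: Rmin_pos; apply: Rmin_pos.
split; first nra.
move=> h /Rmin_Rgt [/Rmin_Rgt [/H1 hr1 /H2 hr2] /Rmin_Rgt [/Hf lf /Hg lg]].
have -> : f h * g h - f0 * g0 - RtoC h * (d1 * g0 + f0 * d2) =
  f0 * (g h - g0 - RtoC h * d2) + g0 * (f h - f0 - RtoC h * d1) + (f h - f0) * (g h - g0).
  by cplx_ring.
set r1 := f h - f0 - RtoC h * d1; set r2 := g h - g0 - RtoC h * d2.
have p1 : (cnorm1 (f0 * r2)%R <= cnorm1 f0 * (K2 * h ^ 2))%Re.
  exact: Rle_trans (cnorm1M _ _) (Rmult_le_compat_l _ _ _ f00 hr2).
have p2 : (cnorm1 (g0 * r1)%R <= cnorm1 g0 * (K1 * h ^ 2))%Re.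
  exact: Rle_trans (cnorm1M _ _) (Rmult_le_compat_l _ _ _ g00 hr1).
have p3 : (cnorm1 ((f h - f0) * (g h - g0))%R <= L1 * L2 * h ^ 2)%Re.
  apply: Rle_trans (cnorm1M _ _) _.
  apply: Rle_trans (Rmult_le_compat _ _ _ _ (cnorm1_ge0 _) (cnorm1_ge0 _) lf lg) _.
  by rewrite -Rsqr_pow2 Rsqr_abs /Rsqr; right; ring.
have p12 := Rle_trans _ _ _ (cnorm1D _ _) (Rplus_le_compat _ _ _ _ p1 p2).
apply: Rle_trans (cnorm1D _ _) _; apply: Rle_trans (Rplus_le_compat _ _ _ _ p12 p3) _.
by right; ring.
Qed.

Lemma qdiff_sum (I : Type) (r : seq I) (F : I -> R -> cplx) D :
  (forall i, qdiff (F i) (D i)) -> qdiff (fun h => \sum_(i <- r) F i h) (\sum_(i <- r) D i).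
Proof.
move=> H; elim: r => [|x r IH].
  by apply: (qdiff_ext _ _ (qdiff_cst 0)) => [h|]; rewrite big_nil.
by apply: (qdiff_ext _ _ (qdiffD (H x) IH)) => [h|]; rewrite big_cons.
Qed.

Lemma qdiffMl c f d : qdiff f d -> qdiff (fun h => c * f h) (c * d).
Proof. by move=> /(qdiffM (qdiff_cst c)); rewrite mul0r add0r. Qed.

Lemma qdiff_prod n (F : 'I_n -> R -> cplx) D : (forall i, qdiff (F i) (D i)) ->
  qdiff (fun h => \prod_(i < n) F i h) (\sum_(j < n) D j * \prod_(i < n | j != i) F i 0%Re).
Proof.
elim: n F D => [|n IH] F D H.
  by apply: (qdiff_ext _ _ (qdiff_cst 1)) => [h|]; rewrite big_ord0.
pose w := widen_ord (leqnSn n).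
have w_max (j : 'I_n) : w j != ord_max.
  by apply/eqP => /(congr1 val) /= e; have := ltn_ord j; rewrite e ltnn.
apply: (qdiff_ext _ _ (qdiffM (IH _ _ (fun i => H (w i))) (H ord_max))) => [h|].
  by rewrite big_ord_recr.
rewrite [in RHS]big_ord_recr /= mulr_suml; congr (_ + _).
  apply: eq_bigr => j _.
  rewrite [in RHS]big_mkcond big_ord_recr /= -big_mkcond /=.
  by rewrite w_max -mulrA.
rewrite mulrC; congr (_ * _).
rewrite [in RHS]big_mkcond big_ord_recr /= eqxx mulr1.
by apply: eq_bigr => i _; rewrite eq_sym w_max.
Qed.

(* Jacobi's formula: the derivative of the Leibniz expansion, regrouped into cofactors. *)
Lemma sum_perm_cofactor n (A A1 : 'M[cplx]_n) :
  \sum_(s : 'S_n) (-1) ^+ s * (\sum_(j < n) A1 j (s j) * \prod_(i < n | j != i) A i (s i))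
  = \sum_(j < n) \sum_(k < n) A1 j k * cofactor A j k.
Proof.
under eq_bigr => s _ do rewrite mulr_sumr.
rewrite exchange_big /=; apply: eq_bigr => j _.
under [RHS]eq_bigr => k _ do rewrite expand_cofactor mulr_sumr.
rewrite (partition_big (fun s : 'S_n => s j) predT) //=.
by apply: eq_bigr => k _; apply: eq_bigr => s /eqP <-; rewrite mulrCA.
Qed.

Lemma sum_cofactor_mxtrace n (A A1 : 'M[cplx]_n) : A \in unitmx ->
  \sum_(j < n) \sum_(k < n) A1 j k * cofactor A j k = \det A * \tr (A1 *m invmx A).
Proof.
move=> hA; have dA : \det A != 0 by rewrite -unitfE -unitmxE.
rewrite /mxtrace mulr_sumr; apply: eq_bigr => j _; rewrite mxE mulr_sumr.
apply: eq_bigr => k _; rewrite /invmx hA !mxE.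
by rewrite [RHS]mulrCA (mulVKf dA).
Qed.

Definition mxqdiff m n (F : R -> 'M[cplx]_(m, n)) (F1 : 'M[cplx]_(m, n)) :=
  forall i j, qdiff (fun h => F h i j) (F1 i j).

Lemma mxqdiff_cst m n (A : 'M[cplx]_(m, n)) : mxqdiff (fun _ => A) 0.
Proof. by move=> i j; rewrite mxE; exact: qdiff_cst. Qed.

Lemma mxqdiffD m n (F G : R -> 'M[cplx]_(m, n)) F1 G1 :
  mxqdiff F F1 -> mxqdiff G G1 -> mxqdiff (fun h => F h + G h) (F1 + G1).
Proof. by move=> HF HG i j; apply: (qdiff_ext _ _ (qdiffD (HF i j) (HG i j))) => [h|]; rewrite mxE. Qed.

Lemma mxqdiffM m n p (F : R -> 'M[cplx]_(m, n)) (G : R -> 'M[cplx]_(n, p)) F1 G1 :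
  mxqdiff F F1 -> mxqdiff G G1 -> mxqdiff (fun h => F h *m G h) (F1 *m G 0%Re + F 0%Re *m G1).
Proof.
move=> HF HG i j.
apply: (qdiff_ext _ _ (qdiff_sum (index_enum _) (fun k => qdiffM (HF i k) (HG k j)))) => [h|].
  by rewrite mxE.
by rewrite !mxE -big_split.
Qed.

Lemma qdiff_det n (F : R -> 'M[cplx]_n) F1 : mxqdiff F F1 ->
  qdiff (fun h => \det (F h)) (\sum_(j < n) \sum_(k < n) F1 j k * cofactor (F 0%Re) j k).
Proof.
move=> H; rewrite -sum_perm_cofactor.
exact: qdiff_sum (fun s : 'S_n => qdiffMl ((-1) ^+ s) (qdiff_prod (fun i => H i (s i)))).
Qed.

Lemma qdiff_pderiv_x (g : R -> R -> cplx) x y d :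
  qdiff (fun h => g (x + h)%Re y) d -> has_pderiv_x g x y d.
Proof.
move=> [K [del [del0 [K0 H]]]] eps he.
exists (Rmin del (eps / (K + 1))); split.
  by apply: Rmin_pos => //; apply: Rdiv_lt_0_compat; lra.
move=> h hn /Rmin_Rgt [/H hK hs]; rewrite Rplus_0_r in hK.
have ha : (0 < Rabs h)%Re by exact: Rabs_pos_lt.
have -> : RtoC (/ h) * (g (x + h)%Re y - g x y) - d =
  RtoC (/ h) * (g (x + h)%Re y - g x y - RtoC h * d).
  by apply: cplx_ext => /=; field.
apply: Rle_lt_trans (cabs_le_cnorm1 _) _; rewrite cnorm1_RtoCM Rabs_inv.
apply: (@Rle_lt_trans _ (/ Rabs h * (K * h ^ 2))%Re).
  by apply: Rmult_le_compat_l => //; left; exact: Rinv_0_lt_compat.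
rewrite -Rsqr_pow2 Rsqr_abs /Rsqr.
have -> : (/ Rabs h * (K * (Rabs h * Rabs h)) = K * Rabs h)%Re by field; lra.
rewrite (_ : eps = (K + 1) * (eps / (K + 1)))%Re; last by field; lra.
nra.
Qed.

(** * The x-derivative of [I + (K Xi)^2] *)

Lemma Xi_exponent_commute M (S : 'M[cplx]_M) x y : S \in unitmx ->
  S *m - (RtoC x *: S + RtoC y *: invmx S) = - (RtoC x *: S + RtoC y *: invmx S) *m S.
Proof.
move=> hS; rewrite mulmxN mulNmx mulmxDr mulmxDl -!scalemxAr -!scalemxAl.
by rewrite mulmxV // mulVmx.
Qed.

Lemma Xi_commute M (S : 'M[cplx]_M) x y : S \in unitmx -> S *m Xi S x y = Xi S x y *m S.
Proof. by move=> hS; apply: mexp_commute; exact: Xi_exponent_commute. Qed.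

Lemma mxqdiff_Xi M (S : 'M[cplx]_M) x y : S \in unitmx ->
  mxqdiff (fun h => Xi S (x + h)%Re y) (- S *m Xi S x y).
Proof.
move=> hS; have := Xi_exponent_commute x y hS.
set B := - (RtoC x *: S + RtoC y *: invmx S); set C := - S => hSB.
have hBC : C *m B = B *m C by rewrite /C (mulNmx S B) (mulmxN B S) hSB.
have [b b0 hB] := mxbound_exists B; have [c c0 hC] := mxbound_exists C.
have w0 : (0 <= b + c)%Re by lra.
have hB' : mxbound B (b + c) by apply: (mxbound_le hB); lra.
have hC' : mxbound C (b + c) by apply: (mxbound_le hC); lra.
have eXi h : Xi S (x + h)%Re y = mexp (B + RtoC h *: C).
  by rewrite /Xi; congr mexp; apply/matrixP => i j; rewrite !mxE; cplx_ring.
move=> i j; exists (exp (4 * (2 * (INR M * (b + c)) + 1))), 1%Re; split; first lra.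
split; first by left; exact: exp_pos.
move=> h /Rlt_le h1; have := mexp_first_order hBC w0 hB' hC' h1 i j.
by rewrite !mxE Rplus_0_r eXi Rmult_comm.
Qed.

Lemma mxqdiff_Amat M (S K : 'M[cplx]_M) x y : S \in unitmx ->
  let P := K *m Xi S x y in
  mxqdiff (fun h => Amat S K (x + h)%Re y) (- (P *m S *m P) - P *m (P *m S)).
Proof.
move=> hS P; have dP := mxqdiffM (mxqdiff_cst K) (mxqdiff_Xi x y hS).
have := mxqdiffD (mxqdiff_cst 1%:M) (mxqdiffM dP dP); rewrite /= Rplus_0_r.
by rewrite !mul0mx !add0r !mulNmx !mulmxN (Xi_commute x y hS) /P !mulmxA !mulNmx.
Qed.

(** * The trace identities *)

Lemma invmx_commute n (A P : 'M[cplx]_n) : A \in unitmx -> P *m A = A *m P ->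
  invmx A *m P = P *m invmx A.
Proof.
move=> hA hPA; rewrite -[invmx A *m P]mulmx1 -(mulmxV hA) !mulmxA.
by rewrite -[invmx A *m P *m A]mulmxA hPA !mulmxA (mulVmx hA) mul1mx.
Qed.

Lemma mxtrace11 (W : 'M[cplx]_1) : W ord0 ord0 = \tr W.
Proof. by rewrite /mxtrace big_ord1. Qed.

Section SylvesterTraces.
Variables (M : nat) (S K Xi0 Y : 'M[cplx]_M) (U : 'M[cplx]_(1, M)) (V : 'M[cplx]_(M, 1)).
Hypotheses (hSX : S *m Xi0 = Xi0 *m S) (hPY : Y *m (K *m Xi0) = K *m Xi0 *m Y)
  (hK : S *m K + K *m S = V *m U).

Lemma sylvester_trace_Xi : (U *m Xi0 *m Y *m V) ord0 ord0 = 2%:R * \tr (S *m K *m Xi0 *m Y).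
Proof.
rewrite mxtrace11 mxtrace_mulC !mulmxA -hK !mulmxDl mxtraceD.
have -> : K *m S *m Xi0 *m Y = (K *m Xi0) *m (S *m Y) by rewrite -(mulmxA K S) hSX !mulmxA.
rewrite (mxtrace_mulC (K *m Xi0)) -(mulmxA S Y) hPY !mulmxA.
by rewrite mulr_natl mulr2n.
Qed.

Lemma sylvester_trace_XiKXi :
  \tr ((- (K *m Xi0 *m S *m (K *m Xi0)) - K *m Xi0 *m (K *m Xi0 *m S)) *m Y)
  = - (U *m Xi0 *m K *m Xi0 *m Y *m V) ord0 ord0.
Proof.
have hP2Y : K *m Xi0 *m (K *m Xi0) *m Y = Y *m (K *m Xi0 *m (K *m Xi0)).
  by rewrite -mulmxA -hPY mulmxA -hPY -mulmxA.
have f1 : \tr (S *m K *m Xi0 *m K *m Xi0 *m Y) = \tr (K *m Xi0 *m (K *m Xi0) *m S *m Y).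
  rewrite (_ : S *m K *m Xi0 *m K *m Xi0 *m Y = S *m (K *m Xi0 *m (K *m Xi0) *m Y)).
    by rewrite mxtrace_mulC hP2Y -(mulmxA Y) (mxtrace_mulC Y) !mulmxA.
  by rewrite !mulmxA.
have f3 : \tr (K *m S *m Xi0 *m K *m Xi0 *m Y) = \tr (K *m Xi0 *m S *m (K *m Xi0) *m Y).
  by rewrite -(mulmxA K S Xi0) hSX !mulmxA.
rewrite !mulmxA in f1 f3.
rewrite mxtrace11 (mxtrace_mulC _ V) !mulmxA -hK !mulmxDl !mxtraceD !mulNmx !raddfN opprD addrC.
by rewrite f1 f3.
Qed.

End SylvesterTraces.

Theorem mainTheorem6 (M : nat) (S K : 'M[cplx]_M) (U : 'M[cplx]_(1, M))
  (V : 'M[cplx]_(M, 1)) (p0 : cplx) :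
  S \in unitmx ->
  S *m K + K *m S = V *m U ->
  forall x y : Rdefinitions.R, Dfun S K x y != 0 ->
    (exists Dx : cplx, has_pderiv_x (Dfun S K) x y Dx /\
       pfun S K U V p0 x y = p0 + Dx / Dfun S K x y) /\
    qfun S K U V x y = 2%:R * \tr (S *m K *m Xi S x y *m invmx (Amat S K x y)).
Proof.
move=> hS hK x y hD; rewrite /pfun /qfun /Dfun in hD *.
have hA : Amat S K x y \in unitmx by rewrite unitmxE unitfE.
have hSX := Xi_commute x y hS.
have hPY : invmx (Amat S K x y) *m (K *m Xi S x y) = K *m Xi S x y *m invmx (Amat S K x y).
  by apply: invmx_commute => //; rewrite mulmxDr mulmxDl mulmx1 mul1mx !mulmxA.
split; last exact: sylvester_trace_Xi.
have := @qdiff_pderiv_x (Dfun S K) x y _ (qdiff_det (mxqdiff_Amat K x y hS)).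
rewrite /= Rplus_0_r sum_cofactor_mxtrace // => dD; eexists; split; first exact: dD.
by rewrite [_ * \tr _]mulrC mulfK // (sylvester_trace_XiKXi hSX hPY hK).
Qed.
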